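(* Let $N\ge2$ and $F\in GL_N(\mathbb{C})$ with $\mathrm{Tr}(F^*F)=\mathrm{Tr}((F^*F)^{-1})$. Then $\omega(R(U_F^+))=\omega_{X_{can}}(R(U_F^+))$, where $X_{can}=\{\alpha,\bar\alpha\}$.
   Context: Define $0<q\le1$ by $q+q^{-1}=\mathrm{Tr}(F^*F)$ and $[x]_q=\frac{q^{-x}-q^x}{q^{-1}-q}$ ($[x]_1=x$). $R(U_F^+)$ is the fusion algebra of the free unitary quantum group with quantum dimension: irreducibles are words in the free monoid on $\alpha,\bar\alpha$ ($\alpha$ the fundamental representation, empty word $e$ trivial), the involution reverses words and swaps $\alpha\leftrightarrow\bar\alpha$, product $x\cdot y=\sum_{a,b,c:\ x=ac,\ y=\bar cb}ab$. With $w^n_{+1}=\alpha\bar\alpha\alpha\cdots$, $w^n_{-1}=\bar\alpha\alpha\bar\alpha\cdots$ ($n$ letters), each nonempty word is uniquely a concatenation $w^{k_1}_{\varepsilon_1}\cdots w^{k_m}_{\varepsilon_m}$ of maximal alternating blocks and has quantum dimension $[k_1+1]_q\cdots[k_m+1]_q$. For a finite generating set $X$ (finite, involution-closed, every word appears with nonzero coefficient in some product of elements of $X$): $\ell_X$ word length, $B_X(n)=\{\beta:\ell_X(\beta)\le n\}$, $|B_X(n)|=\sum_{\beta\in B_X(n)}d(\beta)^2$, $\omega_X=\lim_n|B_X(n)|^{1/n}$ (exists), $\omega=\inf_X\omega_X$. *)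

From HB Require Import structures.
From mathcomp Require Import all_boot all_order all_algebra.
From mathcomp Require Import complex.
From mathcomp Require Import all_classical all_reals all_analysis.
Set Implicit Arguments. Unset Strict Implicit. Unset Printing Implicit Defensive.
Import Order.TTheory GRing.Theory Num.Theory.
Local Open Scope ring_scope.

(* Irreducibles of R(U_F^+): words in the free monoid on {alpha, alphabar}.
   Letter [true] = alpha, letter [false] = alphabar, [::] = trivial rep e. *)
Definition word := seq bool.

Definition wconj (w : word) : word := rev (map negb w).

(* x . y = sum_{x = a c, y = wconj c b} a b  (as a list with multiplicities) *)
Definition fusion (x y : word) : seq word :=
  [seq take (size x - k) x ++ drop k y |
     k <- iota 0 (minn (size x) (size y)).+1 &
     take k y == wconj (drop (size x - k) x)].

(* lengths k_1, ..., k_m of the maximal alternating blocks of a word *)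
Fixpoint alt_blocks_aux (prev : bool) (cur : nat) (w : word) : seq nat :=
  match w with
  | [::] => [:: cur]
  | b :: w' => if b == prev then cur :: alt_blocks_aux b 1 w'
               else alt_blocks_aux b cur.+1 w'
  end.
Definition alt_blocks (w : word) : seq nat :=
  if w is b :: w' then alt_blocks_aux b 1 w' else [::].

Section Growth.
Variable R : realType.

Definition qint (q : R) (x : nat) : R :=
  if q == 1 then x%:R
  else (q ^- x - q ^+ x) / (q^-1 - q).

Definition qdim (q : R) (w : word) : R :=
  \prod_(k <- alt_blocks w) qint q k.+1.

(* support of all products of exactly n elements of X (n = 0: the unit e) *)
Fixpoint prod_support (X : seq word) (n : nat) : seq word :=
  if n is m.+1 then
    flatten [seq fusion u x | u <- prod_support X m, x <- X]
  else [:: [::]].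

Definition generating (X : seq word) : Prop :=
  (forall x, x \in X -> wconj x \in X) /\
  (forall w : word, exists n, w \in prod_support X n).

Definition ball (X : seq word) (n : nat) : seq word :=
  undup (flatten [seq prod_support X m | m <- iota 0 n.+1]).

Definition ball_size (q : R) (X : seq word) (n : nat) : R :=
  \sum_(w <- ball X n) qdim q w ^+ 2.

Definition omegaX (q : R) (X : seq word) : R :=
  limn (fun n : nat => ball_size q X n `^ (n%:R^-1)).

Definition omega (q : R) : R :=
  inf [set omegaX q X | X in generating].

End Growth.

Definition Xcan : seq word := [:: [:: true]; [:: false]].

Definition adjmx (R : rcfType) (N : nat) (F : 'M[R[i]]_N) : 'M[R[i]]_N :=
  (map_mx conjc F)^T.

From Pilot Require Import Defs.
From HB Require Import structures.
From mathcomp Require Import all_boot all_order all_algebra.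
From mathcomp Require Import complex.
From mathcomp Require Import all_classical all_reals all_analysis.
From mathcomp Require Import zify ring lra.
Import Order.TTheory GRing.Theory Num.Theory.
Set Implicit Arguments. Unset Strict Implicit. Unset Printing Implicit Defensive.
Local Open Scope ring_scope.

(* A generating set X contains a word x of nonzero charge (number of alpha's minus number
   of alphabar's), since the charge is additive under fusion and alpha has charge 1.
   The substitution alpha |-> x, alphabar |-> conj x is then injective, maps every word of
   length <= n, i.e. every element of B_Xcan(n), into B_X(n), and does not decrease quantum
   dimensions: if x is not alternating, every letter of w creates a block boundary, so the
   dimension of the image is >= [2]_q^|w| >= d(w); if x is alternating, its nonzero charge
   forces it to start and end with the same letter, so the maximal alternating blocks of w
   are stretched by the factor |x|. Hence |B_Xcan(n)| <= |B_X(n)| for all n. Finally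
   d(x) d(y) = sum_{z in x.y} d(z) makes n |-> |B_X(n)| submultiplicative, so omega_X exists
   by Fekete's lemma, and omega_Xcan <= omega_X. *)

(** * Words and the fusion rule *)

Lemma wconj_cat (u v : word) : wconj (u ++ v) = wconj v ++ wconj u.
Proof. by rewrite /wconj map_cat rev_cat. Qed.

Lemma wconj_cons b (w : word) : wconj (b :: w) = rcons (wconj w) (~~ b).
Proof. by rewrite /wconj /= rev_cons. Qed.

Lemma wconj_rcons (w : word) b : wconj (rcons w b) = ~~ b :: wconj w.
Proof. by rewrite /wconj map_rcons rev_rcons. Qed.

Lemma size_wconj (w : word) : size (wconj w) = size w.
Proof. by rewrite /wconj size_rev size_map. Qed.

Lemma wconj_eq0 (w : word) : (wconj w == [::]) = (w == [::]).
Proof. by rewrite -!size_eq0 size_wconj. Qed.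

Lemma head_wconj (w : word) : w != [::] -> head true (wconj w) = ~~ last true w.
Proof. by case/lastP: w => [|w b] // _; rewrite wconj_rcons last_rcons. Qed.

Lemma last_wconj (w : word) : w != [::] -> last true (wconj w) = ~~ head true w.
Proof. by case: w => [|b w] // _; rewrite wconj_cons last_rcons. Qed.

Lemma fusionP (x y z : word) :
  reflect (exists a b c, [/\ x = a ++ c, y = wconj c ++ b & z = a ++ b])
          (z \in fusion x y).
Proof.
apply: (iffP mapP) => [[k]|[a [b [c [-> -> ->]]]]].
  rewrite mem_filter mem_iota ltnS leq_min => /andP[/eqP ey /and3P[_ kx _]] ->.
  exists (take (size x - k) x), (drop k y), (drop (size x - k) x).
  by rewrite -ey !cat_take_drop.
exists (size c); last by rewrite size_cat addnK take_size_cat // -(size_wconj c) drop_size_cat.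
rewrite mem_filter mem_iota ltnS leq_min !size_cat size_wconj leq_addl leq_addr andbT.
by rewrite addnK drop_size_cat // -(size_wconj c) take_size_cat ?eqxx.
Qed.

Lemma mem_fusion_cat (x y : word) : x ++ y \in fusion x y.
Proof. by apply/fusionP; exists x, y, [::]; rewrite cats0. Qed.

Lemma size_mem_fusion (x y z : word) :
  z \in fusion x y -> (size z <= size x + size y)%N.
Proof. by case/fusionP=> a [b [c [-> -> ->]]]; rewrite !size_cat size_wconj; lia. Qed.

Lemma fusion_nill (y : word) : fusion [::] y = [:: y].
Proof. by rewrite /fusion /= min0n /= take0 /= drop0. Qed.

Lemma fusion_nilr (x : word) : fusion x [::] = [:: x].
Proof. by rewrite /fusion /= subn0 drop_size /= subn0 take_size cats0. Qed.

Lemma cat_eq_cat (a b c d : word) : a ++ b = c ++ d ->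
  (exists e, c = a ++ e /\ b = e ++ d) \/ (exists e, a = c ++ e /\ d = e ++ b).
Proof.
elim: a c => [|x a IH] [|y c] /=.
- by move=> ->; left; exists [::].
- by move=> ->; left; exists (y :: c).
- by move=> <-; right; exists (x :: a).
case=> -> /IH [[e [-> ->]]|[e [-> ->]]]; [left | right]; by exists e.
Qed.

Lemma mem_fusion_assoc (x y w u z : word) :
  u \in fusion x y -> z \in fusion u w ->
  exists2 v, v \in fusion y w & z \in fusion x v.
Proof.
case/fusionP=> a1 [b1 [c1 [-> -> ->]]].
case/fusionP=> a2 [b2 [c2 [/cat_eq_cat [[e [-> ->]]|[e [-> ->]]] -> ->]]].
- exists (wconj c1 ++ e ++ b2); apply/fusionP.
    by exists (wconj c1 ++ e), b2, c2; rewrite ?wconj_cat -?catA.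
  by exists a1, (e ++ b2), c1; rewrite ?wconj_cat -?catA.
- exists (wconj c1 ++ wconj e ++ b2); apply/fusionP.
    by exists (wconj c1), (wconj e ++ b2), b1; rewrite ?wconj_cat -?catA.
  by exists a2, b2, (e ++ c1); rewrite ?wconj_cat -?catA.
Qed.

Lemma fusion_rcons_cons (x y : word) a b :
  fusion (rcons x a) (b :: y) =
  (rcons x a ++ b :: y) :: (if b == ~~ a then fusion x y else [::]).
Proof.
rewrite /fusion size_rcons [size (b :: y)]/= minnSS.
have -> : forall m, iota 0 m.+2 = 0%N :: [seq (1 + k)%N | k <- iota 0 m.+1].
  by move=> m; rewrite -(iotaDl 1 0).
have : forall k, k \in iota 0 (minn (size x) (size y)).+1 -> (k <= size x)%N.
  by move=> k; rewrite mem_iota ltnS => /andP[_ /leq_trans]; apply; apply: geq_minl.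
move: (iota 0 _) => l l_le.
rewrite /= subn0 drop_oversize ?size_rcons // eqxx /= subn0 take_oversize ?size_rcons //.
congr (_ :: _); rewrite filter_map -map_comp.
have drop_rcons_l k : k \in l ->
    drop ((size x).+1 - (1 + k)) (rcons x a) = rcons (drop (size x - k) x) a.
  by move/l_le=> kx; rewrite add1n subSS drop_rcons // leq_subr.
case: eqP => [->|/eqP ba].
- rewrite (@eq_in_filter _ _ (fun k => take k y == wconj (drop (size x - k) x))).
    apply/eq_in_map => k; rewrite mem_filter => /andP[_ kl] /=.
    by rewrite add1n subSS -cats1 takel_cat ?leq_subr.
  by move=> k kl; rewrite /preim /= drop_rcons_l // wconj_rcons ?add1n /= eqseq_cons eqxx.
- rewrite (@eq_in_filter _ _ pred0) ?filter_pred0 // => k kl.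
  by rewrite /preim /= drop_rcons_l // wconj_rcons ?add1n /= eqseq_cons (negbTE ba).
Qed.

(** * Alternating blocks *)

Definition alternating (w : word) : bool := sorted (fun a b : bool => a != b) w.

Definition block_boundary (u v : word) : bool :=
  [|| u == [::], v == [::] | last true u == head true v].

Lemma alternating_cat (u v : word) : u != [::] -> v != [::] ->
  alternating u -> alternating v -> last true u != head true v -> alternating (u ++ v).
Proof.
case: u => [|a u] // _; case: v => [|b v] // _.
by rewrite /alternating /= cat_path => -> /= -> /= ->.
Qed.

Lemma alternating_wconj (w : word) : alternating w -> alternating (wconj w).
Proof.
rewrite /alternating /wconj rev_sorted sorted_map.
by apply: sub_sorted => a b /=; rewrite eq_sym (inj_eq negb_inj).
Qed.

Lemma alt_blocks_aux_cat (u v : word) p c b : last p u = b ->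
  alt_blocks_aux p c (u ++ b :: v) = alt_blocks_aux p c u ++ alt_blocks_aux b 1 v.
Proof.
elim: u p c => [|a u IH] p c /=; first by move=> ->; rewrite eqxx.
by move=> lu; case: eqP => _; rewrite IH.
Qed.

Lemma alt_blocks_cat (u v : word) : block_boundary u v ->
  alt_blocks (u ++ v) = alt_blocks u ++ alt_blocks v.
Proof.
case: v => [|b v]; first by rewrite !cats0.
by case: u => [|a u] // /or3P[//|//|/eqP lu] /=; apply: alt_blocks_aux_cat.
Qed.

Lemma alt_blocks_alternating (w : word) : w != [::] -> alternating w ->
  alt_blocks w = [:: size w].
Proof.
case: w => [|a w] // _; rewrite /alternating /=.
suff aux c : path (fun a b : bool => a != b) a w -> alt_blocks_aux a c w = [:: (c + size w)%N].
  by move/(aux 1%N)->.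
elim: w a c => [|b w IH] a c /=; first by rewrite addn0.
by case/andP=> /negbTE; rewrite eq_sym => -> /IH ->; rewrite addnS.
Qed.

Lemma sumn_alt_blocks (w : word) : sumn (alt_blocks w) = size w.
Proof.
case: w => [|a w] //=.
suff aux c : sumn (alt_blocks_aux a c w) = (c + size w)%N by rewrite aux add1n.
elim: w a c => [|b w IH] a c /=; first by rewrite addn0.
by case: eqP => _ /=; rewrite IH; lia.
Qed.

Lemma block_boundary_catr (u v w : word) :
  v != [::] -> block_boundary u v -> block_boundary u (v ++ w).
Proof.
by case: v => [|b v] // _ /or3P[->|//|/eqP ->]; rewrite /block_boundary /= ?eqxx ?orbT.
Qed.

Lemma block_boundary_catl (u v w : word) :
  v != [::] -> block_boundary v w -> block_boundary (u ++ v) w.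
Proof.
case: v => [|b v] // _; rewrite /block_boundary => /or3P[//|->|/eqP /= lv].
  by rewrite !orbT.
by rewrite last_cat /= lv eqxx !orbT.
Qed.

Lemma split_last_block (x : word) a : exists P A,
  [/\ x = P ++ A, alternating (rcons A a) & block_boundary P (rcons A a)].
Proof.
elim/last_ind: x a => [|x c IH] a; first by exists [::], [::].
have [P [A [-> altAc bPA]]] := IH c.
have [<-|ca] := eqVneq c a.
  exists (rcons (P ++ A) c), [::]; rewrite cats0; split=> //.
  by rewrite /block_boundary /= last_rcons eqxx !orbT.
exists P, (rcons A c); split; first by rewrite rcons_cat.
  move: altAc; rewrite /alternating; case: A {bPA} => [|h A] /=; first by rewrite ca.
  by rewrite !rcons_path last_rcons ca andbT.
by case: A bPA {altAc}.
Qed.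

Lemma split_first_block (y : word) b : exists B Q,
  [/\ y = B ++ Q, alternating (b :: B) & block_boundary (b :: B) Q].
Proof.
elim: y b => [|c y IH] b; first by exists [::], [::].
have [B [Q [-> altcB bBQ]]] := IH c.
have [<-|bc] := eqVneq b c.
  by exists [::], (b :: B ++ Q); rewrite /block_boundary /= eqxx ?orbT.
by exists (c :: B), Q; split=> //; rewrite /alternating /= bc.
Qed.

Lemma nonalternating_split (w : word) : ~~ alternating w ->
  exists u v, [/\ w = u ++ v, u != [::], v != [::] & last true u = head true v].
Proof.
elim: w => [|a [|b w] IH] //; rewrite /alternating /=.
have [<-|ab] := eqVneq a b; first by exists [:: a], (a :: w).
move=> /IH [u [v [e u_neq0 v_neq0 luv]]].
by exists (a :: u), v; rewrite e; case: u e u_neq0 luv.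
Qed.

Lemma alternating_rconsl (u : word) a : alternating (rcons u a) -> alternating u.
Proof. by rewrite /alternating -cats1 => /cat_sorted2[]. Qed.

Lemma block_boundary_rconsl (u v : word) a :
  block_boundary u (rcons v a) -> block_boundary u v.
Proof. by case: v => [|b v]; rewrite /block_boundary ?orbT. Qed.

Lemma block_boundary_behead (u v : word) b : block_boundary (b :: u) v -> block_boundary u v.
Proof. by case: u => [|c u]; rewrite /block_boundary ?orbT. Qed.

(** * Products and balls *)

Lemma prod_supportSP (X : seq word) n z :
  reflect (exists u x, [/\ u \in prod_support X n, x \in X & z \in fusion u x])
          (z \in prod_support X n.+1).
Proof.
apply: (iffP flattenP) => [[s /allpairsP [[u x] /= [hu hx ->]] hz]|[u [x [hu hx hz]]]].
  by exists u, x.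
by exists (fusion u x) => //; apply/allpairsP; exists (u, x).
Qed.

Lemma prod_supportD (X : seq word) n m z : z \in prod_support X (n + m) ->
  exists x y, [/\ x \in prod_support X n, y \in prod_support X m & z \in fusion x y].
Proof.
elim: m z => [|m IH] z.
  by rewrite addn0 => hz; exists z, [::]; rewrite fusion_nilr !inE.
rewrite addnS => /prod_supportSP [u [x0 [/IH [x [y [hx hy hu]]] hx0 hz]]].
have [v hv hz'] := mem_fusion_assoc hu hz.
by exists x, v; split=> //; apply/prod_supportSP; exists y, x0.
Qed.

Lemma ballP (X : seq word) n z :
  reflect (exists2 m, (m <= n)%N & z \in prod_support X m) (z \in Defs.ball X n).
Proof.
rewrite mem_undup; apply: (iffP flattenP) => [[s /mapP [m hm ->] hz]|[m hm hz]].
  by exists m => //; move: hm; rewrite mem_iota ltnS.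
by exists (prod_support X m) => //; apply/mapP; exists m; rewrite // mem_iota ltnS.
Qed.

Lemma mem_ball_fusion (X : seq word) n m z : z \in Defs.ball X (n + m) ->
  exists x y, [/\ x \in Defs.ball X n, y \in Defs.ball X m & z \in fusion x y].
Proof.
case/ballP=> j le_j_nm; rewrite -(subnKC (geq_minl j n)) => /prod_supportD [x [y [hx hy hz]]].
exists x, y; split=> //; apply/ballP; first by exists (minn j n); rewrite ?geq_minr.
by exists (j - minn j n)%N => //; lia.
Qed.

Lemma ler_sum_sub_uniq (R : numDomainType) (T : eqType) (f : T -> R) (s t : seq T) :
  (forall x, 0 <= f x) -> uniq s -> {subset s <= t} ->
  \sum_(x <- s) f x <= \sum_(x <- t) f x.
Proof.
move=> f_ge0; elim: s t => [|a s IH] t; first by rewrite big_nil sumr_ge0.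
rewrite cons_uniq => /andP[a_notin_s uniq_s] sub_st.
have a_in_t : a \in t by apply: sub_st; rewrite inE eqxx.
rewrite (perm_big _ (perm_to_rem a_in_t)) !big_cons lerD2l IH // => x x_in_s.
have : x \in t by apply: sub_st; rewrite inE x_in_s orbT.
rewrite (perm_mem (perm_to_rem a_in_t)) inE => /orP[/eqP x_eq_a|//].
by move: a_notin_s; rewrite -x_eq_a x_in_s.
Qed.

Lemma sumr_sqr_le (R : numDomainType) (T : Type) (f : T -> R) (s : seq T) :
  (forall x, 0 <= f x) -> \sum_(x <- s) f x ^+ 2 <= (\sum_(x <- s) f x) ^+ 2.
Proof.
move=> f_ge0; elim: s => [|a s IH]; first by rewrite !big_nil expr0n.
rewrite !big_cons sqrrD -addrA lerD2l (le_trans IH) // lerDr.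
by rewrite mulrn_wge0 // mulr_ge0 // sumr_ge0.
Qed.

(** * Charge and substitution *)

Definition charge (w : word) : int := \sum_(b <- w) (if b then 1 else -1).

Lemma charge_nil : charge [::] = 0.
Proof. by rewrite /charge big_nil. Qed.

Lemma charge_cat (u v : word) : charge (u ++ v) = charge u + charge v.
Proof. by rewrite /charge big_cat. Qed.

Lemma charge_wconj (w : word) : charge (wconj w) = - charge w.
Proof. by rewrite /charge big_rev big_map -sumrN; apply: eq_bigr => -[]. Qed.

Lemma charge_eq0_wconj (x : word) : x = wconj x -> charge x = 0.
Proof.
move/(congr1 charge)/eqP; rewrite charge_wconj -subr_eq0 opprK -mulr2n.
by rewrite mulrn_eq0 => /eqP.
Qed.

Lemma charge_fusion (x y z : word) : z \in fusion x y -> charge z = charge x + charge y.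
Proof. by case/fusionP=> a [b [c [-> -> ->]]]; rewrite !charge_cat charge_wconj; ring. Qed.

Lemma charge_prod_support (X : seq word) n w :
  all (fun x => charge x == 0) X -> w \in prod_support X n -> charge w = 0.
Proof.
move=> /allP X0; elim: n w => [|n IH] w; first by rewrite inE => /eqP ->; rewrite charge_nil.
case/prod_supportSP=> u [x [hu hx hw]].
by rewrite (charge_fusion hw) (IH _ hu) (eqP (X0 x hx)).
Qed.

Lemma generating_charge_neq0 (X : seq word) :
  generating X -> exists2 x, x \in X & charge x != 0.
Proof.
case=> _ /(_ [:: true]) [n hn]; apply/hasP; apply: contraPT hn => /hasPn X0.
have /charge_prod_support : all (fun x => charge x == 0) X by apply/allP => x /X0 /negPn.
by move=> /(_ n [:: true]) charge0 /charge0; rewrite /charge big_seq1.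
Qed.

Lemma generating_Xcan : generating Xcan.
Proof.
split=> [x|w]; first by rewrite !inE => /orP[] /eqP ->.
exists (size w); elim/last_ind: w => [|w b IH]; first by rewrite inE.
rewrite size_rcons -cats1; apply/prod_supportSP; exists w, [:: b].
by rewrite mem_fusion_cat; case: b; rewrite !inE.
Qed.

Lemma size_prod_support_Xcan n w : w \in prod_support Xcan n -> (size w <= n)%N.
Proof.
elim: n w => [|n IH] w; first by rewrite inE => /eqP ->.
case/prod_supportSP=> u [x [hu hx /size_mem_fusion]]; move: hx.
by rewrite !inE => /orP[] /eqP -> /leq_trans; apply; rewrite addn1 ltnS IH.
Qed.

Lemma charge_alternating a (w : word) : path (fun a b : bool => a != b) a w ->
  charge (a :: w) = if last a w == a then (if a then 1 else -1) else 0.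
Proof.
elim: w a => [|b w IH] a /=; first by rewrite eqxx /charge big_seq1.
case/andP=> ab /IH IHb.
have -> : charge [:: a, b & w] = (if a then 1 else -1) + charge (b :: w).
  by rewrite /charge big_cons.
rewrite IHb.
have -> : b = ~~ a by move: ab; case: (a); case: (b).
case: eqP => [->|]; first by case: (a); rewrite /= ?eqxx; ring.
by case: (last (~~ a) w); case: (a) => //= _; rewrite addr0.
Qed.

Lemma alternating_charge_neq0 (x : word) : alternating x -> charge x != 0 ->
  last true x = head true x.
Proof.
case: x => [|a x] //=; rewrite /alternating /= => altx.
rewrite charge_alternating //.
by case: ifP => [/eqP ->|_] //; rewrite eqxx.
Qed.

Definition subst_letter (x : word) (b : bool) : word := if b then x else wconj x.

Definition wsubst (x w : word) : word := flatten (map (subst_letter x) w).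

Lemma wsubst_cons x b w : wsubst x (b :: w) = subst_letter x b ++ wsubst x w.
Proof. by []. Qed.

Lemma wsubst_cat x u v : wsubst x (u ++ v) = wsubst x u ++ wsubst x v.
Proof. by rewrite /wsubst map_cat flatten_cat. Qed.

Lemma wsubst_rcons x w b : wsubst x (rcons w b) = wsubst x w ++ subst_letter x b.
Proof. by rewrite -cats1 wsubst_cat /wsubst /= cats0. Qed.

Lemma size_subst_letter x b : size (subst_letter x b) = size x.
Proof. by case: b; rewrite /= ?size_wconj. Qed.

Lemma subst_letter_eq0 x b : (subst_letter x b == [::]) = (x == [::]).
Proof. by rewrite -!size_eq0 size_subst_letter. Qed.

Lemma size_wsubst x w : size (wsubst x w) = (size w * size x)%N.
Proof. by elim: w => [|b w IH] //=; rewrite wsubst_cons size_cat IH size_subst_letter. Qed.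

Lemma wsubst_prod_support (X : seq word) x w :
  (forall y, y \in X -> wconj y \in X) -> x \in X ->
  wsubst x w \in prod_support X (size w).
Proof.
move=> X_conj hx; elim/last_ind: w => [|w b IH]; first by rewrite inE.
rewrite size_rcons wsubst_rcons; apply/prod_supportSP; exists (wsubst x w), (subst_letter x b).
split; rewrite ?mem_fusion_cat //.
by case: b => //=; apply: X_conj.
Qed.

Lemma wsubst_inj x : x != wconj x -> x != [::] -> injective (wsubst x).
Proof.
move=> x_neq_conj x_neq0.
have letter_inj : injective (subst_letter x).
  by move=> [] [] //= e; move: x_neq_conj; [rewrite {1}e | rewrite e]; rewrite eqxx.
have cons_neq0 b w : subst_letter x b ++ wsubst x w != [::].
  by rewrite -size_eq0 size_cat addn_eq0 size_eq0 subst_letter_eq0 (negbTE x_neq0).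
elim=> [|b1 w1 IH] [|b2 w2] //; rewrite ?wsubst_cons.
- by move/esym/eqP; rewrite (negbTE (cons_neq0 _ _)).
- by move/eqP; rewrite (negbTE (cons_neq0 _ _)).
by move/eqP; rewrite eqseq_cat ?size_subst_letter // => /andP[/eqP/letter_inj -> /eqP/IH ->].
Qed.

Lemma subst_letter_split x b : ~~ alternating x -> exists u v,
  [/\ subst_letter x b = u ++ v, u != [::], v != [::] & last true u = head true v].
Proof.
case/nonalternating_split=> u [v [-> u_neq0 v_neq0 luv]].
case: b; first by exists u, v.
exists (wconj v), (wconj u); rewrite /= wconj_cat !wconj_eq0.
by rewrite last_wconj // head_wconj // luv.
Qed.

Section AlternatingLetter.
Variable x : word.
Hypotheses (x_alt : alternating x) (x_neq0 : x != [::]) (x_last : last true x = head true x).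

Let end_letter b := if b then head true x else ~~ head true x.

Lemma subst_letter_alternating b :
  [/\ alternating (subst_letter x b),
      head true (subst_letter x b) = end_letter b &
      last true (subst_letter x b) = end_letter b].
Proof.
rewrite /end_letter; case: b => //=.
by rewrite alternating_wconj // head_wconj // last_wconj // x_last.
Qed.

Lemma head_wsubst w : w != [::] -> head true (wsubst x w) = end_letter (head true w).
Proof.
case: w => [|b w] // _; rewrite wsubst_cons /=.
have [_ <- _] := subst_letter_alternating b.
have : subst_letter x b != [::] by rewrite subst_letter_eq0.
by case: (subst_letter x b).
Qed.

Lemma last_wsubst w : w != [::] -> last true (wsubst x w) = end_letter (last true w).
Proof.
case/lastP: w => [|w b] // _; rewrite wsubst_rcons last_rcons last_cat.
have [_ _ <-] := subst_letter_alternating b.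
have : subst_letter x b != [::] by rewrite subst_letter_eq0.
by case: (subst_letter x b).
Qed.

Lemma alternating_wsubst w : alternating w -> alternating (wsubst x w).
Proof.
elim: w => [|b [|c w] IH] // alt_bcw.
  by rewrite /wsubst /= cats0; case: (subst_letter_alternating b).
have [alt_b _ last_b] := subst_letter_alternating b.
rewrite wsubst_cons; apply: alternating_cat => //.
- by rewrite subst_letter_eq0.
- by rewrite wsubst_cons -size_eq0 size_cat -lt0n ltn_addr // lt0n size_subst_letter size_eq0.
- exact/IH/(path_sorted alt_bcw).
rewrite last_b head_wsubst //= /end_letter.
by move: alt_bcw; rewrite /alternating /=; case: (b) (c) => [] [] //= _; case: (head true x).
Qed.

End AlternatingLetter.

(** * Fekete's lemma *)

Section Fekete.
Local Open Scope classical_set_scope.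
Variable R : realType.

Lemma exprn_powR_invn (x : R) n : (0 < n)%N -> 0 <= x -> (x `^ n%:R^-1) ^+ n = x.
Proof.
move=> n_gt0 x_ge0; have n_neq0 : (n%:R : R) != 0 by rewrite pnatr_eq0 -lt0n.
by rewrite -powR_mulrn ?powR_ge0 // -powRrM mulVf // powRr1.
Qed.

Lemma powR_invn_le (x b : R) n : (0 < n)%N -> 0 <= x -> 0 <= b ->
  (x `^ n%:R^-1 <= b) = (x <= b ^+ n).
Proof.
move=> n_gt0 x_ge0 b_ge0.
by rewrite -(ler_pXn2r n_gt0) ?nnegrE ?powR_ge0 // exprn_powR_invn.
Qed.

Lemma powR_invn_ge (x b : R) n : (0 < n)%N -> 0 <= x -> 0 <= b ->
  (b <= x `^ n%:R^-1) = (b ^+ n <= x).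
Proof.
move=> n_gt0 x_ge0 b_ge0.
by rewrite -(ler_pXn2r n_gt0) ?nnegrE ?powR_ge0 // exprn_powR_invn.
Qed.

Lemma le_exprn_add1 (d M : R) n : 0 < d -> M / d <= n%:R -> M <= (1 + d) ^+ n.
Proof.
move=> d_gt0; rewrite ler_pdivrMr // => /le_trans; apply.
suff : 1 + n%:R * d <= (1 + d) ^+ n by apply: le_trans; rewrite lerDr.
elim: n => [|n IH]; first by rewrite mul0r addr0 expr0.
have nd_ge0 : 0 <= n%:R * d by rewrite mulr_ge0 ?ler0n ?(ltW d_gt0).
by rewrite exprS -natr1 mulrDl mul1r; nra.
Qed.

Variable a : nat -> R.
Hypotheses (a_ge1 : forall n, 1 <= a n) (a_submul : forall n m, a (n + m)%N <= a n * a m).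

Let a_ge0 n : 0 <= a n. Proof. exact: le_trans ler01 (a_ge1 n). Qed.

Lemma submul_le_exprn m (c : R) : (0 < m)%N -> 1 <= c -> a m <= c ^+ m ->
  forall n, a n <= c ^+ n * \sum_(r < m) a r.
Proof.
move=> m_gt0 c_ge1 am_le n; elim/ltn_ind: n => n IH.
have [n_lt_m|m_le_n] := ltnP n m.
  apply: le_trans (_ : a n <= \sum_(r < m) a r) _.
    by rewrite (bigD1 (Ordinal n_lt_m)) //= lerDl sumr_ge0.
  by rewrite ler_peMl ?sumr_ge0 ?exprn_ege1.
rewrite -(subnK m_le_n); apply: le_trans (a_submul _ _) _.
by rewrite exprD mulrAC ler_pM ?a_ge0 ?IH //; lia.
Qed.

Lemma root_submul_le_near m (d : R) : (0 < m)%N -> 0 < d ->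
  \forall n \near \oo, a n `^ n%:R^-1 <= a m `^ m%:R^-1 * (1 + d).
Proof.
move=> m_gt0 d_gt0; set c := a m `^ m%:R^-1; set M := \sum_(r < m) a r.
have c_ge1 : 1 <= c by rewrite powR_invn_ge // expr1n.
have am_le : a m <= c ^+ m by rewrite exprn_powR_invn.
have a_le_cM := submul_le_exprn m_gt0 c_ge1 am_le.
exists (Num.truncn (M / d)).+1 => // n /= le_Md_n.
have n_gt0 : (0 < n)%N by apply: leq_trans le_Md_n.
have M_le : M <= (1 + d) ^+ n.
  by apply: le_exprn_add1 => //; apply/ltW/(lt_le_trans (truncnS_gt _)); rewrite ler_nat.
have c_ge0 := le_trans ler01 c_ge1.
rewrite powR_invn_le ?mulr_ge0 ?addr_ge0 ?(ltW d_gt0) //.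
rewrite exprMn; apply: le_trans (a_le_cM n) _.
by rewrite ler_wpM2l ?exprn_ge0.
Qed.

Lemma cvgn_root_submul : cvgn (fun n => a n `^ n%:R^-1).
Proof.
set u := fun n => a n `^ n%:R^-1; set S := [set u n.+1 | n in [set: nat]].
have S_lb : has_lbound S by exists 0 => _ [n _ <-]; apply: powR_ge0.
have S_inf : has_inf S by split=> //; exists (u 1%N), 0%N.
have L_ge0 : 0 <= inf S.
  by apply: lb_le_inf => [|_ [n _ <-]]; [exists (u 1%N), 0%N | apply: powR_ge0].
apply/cvg_ex; exists (inf S); apply/cvgrPdist_le => e e_gt0.
have e2_gt0 : 0 < e / 2 by rewrite divr_gt0.
have [_ [m _ <-] um_lt] := inf_adherent e2_gt0 S_inf.
set d := e / 2 / (inf S + e / 2).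
have Le2_gt0 : 0 < inf S + e / 2 by rewrite ltr_wpDl.
have d_gt0 : 0 < d by rewrite divr_gt0.
have umd_le : u m.+1 * d <= e / 2.
  rewrite -[leRHS](divfK (lt0r_neq0 Le2_gt0)) [leLHS]mulrC.
  by rewrite ler_wpM2l ?(ltW d_gt0) ?(ltW um_lt).
near=> n.
have L_le : inf S <= u n.
  by apply: (ge_inf S_lb); exists n.-1 => //; rewrite prednK //; near: n; exists 1%N.
have : u n <= u m.+1 * (1 + d) by near: n; apply: root_submul_le_near.
rewrite distrC ger0_norm ?subr_ge0 // mulrDr mulr1 => un_le.
have -> : e = e / 2 + e / 2 by rewrite -splitr.
lra.
Unshelve. all: by end_near.
Qed.

End Fekete.

(** * Quantum integers and quantum dimensions *)

Section QuantumDimension.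
Variables (R : realType) (q : R).
Hypothesis q_gt0 : 0 < q.

Let q_neq0 : q != 0. Proof. by rewrite gt_eqF. Qed.

Lemma qint0 : qint q 0 = 0.
Proof. by rewrite /qint; case: ifP; rewrite ?expr0 ?invr1 ?subrr ?mul0r. Qed.

Lemma qint_den_neq0 : q != 1 -> q^-1 - q != 0.
Proof.
move=> q_neq1; apply: contra q_neq1; rewrite subr_eq0 => /eqP qV.
have /eqP : q * q = 1 by rewrite -{1}qV mulVf.
rewrite -expr2 sqrf_eq1 => /orP[//|/eqP q_eqN1].
by move: q_gt0; rewrite q_eqN1 oppr_gt0 ltr10.
Qed.

Lemma qint1 : qint q 1 = 1.
Proof.
by rewrite /qint; case: eqP => // /eqP q_neq1; rewrite expr1 divff // qint_den_neq0.
Qed.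

Lemma qintSS n : qint q n.+2 = (q + q^-1) * qint q n.+1 - qint q n.
Proof.
rewrite /qint; case: eqP => [->|/eqP q_neq1]; first by rewrite invr1 -!natr1; ring.
have := qint_den_neq0 q_neq1; rewrite -!exprVn !exprS => den_neq0.
field; rewrite q_neq0 /=; apply: contraNneq den_neq0 => qq_eq1.
by apply/eqP/(mulfI q_neq0); rewrite mulr0 mulrBr mulfV // -qq_eq1 mulNr.
Qed.

Lemma qint2 : qint q 2 = q + q^-1.
Proof. by rewrite qintSS qint1 qint0 subr0 mulr1. Qed.

Lemma two_le_addrV : 2 <= q + q^-1.
Proof.
rewrite -(ler_pM2l q_gt0) [X in _ <= X]mulrDr mulfV //.
by rewrite -subr_ge0 (_ : _ - _ = (q - 1) ^+ 2) ?sqr_ge0 //; ring.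
Qed.

Lemma qint_ge0_leS n : 0 <= qint q n <= qint q n.+1.
Proof.
have two_le := two_le_addrV.
elim: n => [|n /andP[qn_ge0 qn_le]]; first by rewrite qint0 qint1 lexx ler01.
have qSn_ge0 := le_trans qn_ge0 qn_le.
by rewrite qSn_ge0 qintSS /=; nra.
Qed.

Lemma qint_ge0 n : 0 <= qint q n.
Proof. by case/andP: (qint_ge0_leS n). Qed.

Lemma qint_le : {homo qint q : m n / (m <= n)%N >-> m <= n}.
Proof.
apply: homo_leq => [//|y x z|n]; first exact: le_trans.
by case/andP: (qint_ge0_leS n).
Qed.

Lemma qint_ge1 n : 1 <= qint q n.+1.
Proof. by rewrite -qint1 qint_le. Qed.

(* Clebsch-Gordan: [k+1][l+1] = [k+l+1] + [k+l-1] + ... + [|k-l|+1], in recursive form. *)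
Lemma qint_mulSS k l :
  qint q k.+1 * qint q l.+1 = qint q (k + l).+1 + qint q k * qint q l.
Proof.
suff /(_ l)[] : forall m, qint q k.+1 * qint q m.+1 = qint q (k + m).+1 + qint q k * qint q m
    /\ qint q k.+1 * qint q m.+2 = qint q (k + m).+2 + qint q k * qint q m.+1 by [].
elim=> [|m [IHm IHSm]].
  by rewrite qint1 qint0 addn0 qint2 [qint q k.+2]qintSS; split; ring.
split; first by rewrite addnS.
rewrite [qint q m.+3]qintSS mulrBr mulrCA IHSm IHm [qint q m.+2]qintSS.
by rewrite !addnS [qint q (k + m).+3]qintSS; ring.
Qed.

Lemma qint_le_expr n : qint q n.+1 <= (q + q^-1) ^+ n.
Proof.
have two_le := two_le_addrV; have qn_ge0 := qint_ge0.
elim: n => [|n IH]; first by rewrite qint1 expr0.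
by rewrite qintSS exprS; have := qn_ge0 n; have := qn_ge0 n.+1; nra.
Qed.

Lemma qdim_nil : qdim q [::] = 1.
Proof. by rewrite /qdim big_nil. Qed.

Lemma qdim_cat (u v : word) : block_boundary u v -> qdim q (u ++ v) = qdim q u * qdim q v.
Proof. by move=> buv; rewrite /qdim alt_blocks_cat // big_cat. Qed.

Lemma qdim_alternating (w : word) : alternating w -> qdim q w = qint q (size w).+1.
Proof.
have [->|w_neq0] := eqVneq w [::]; first by rewrite qdim_nil qint1.
by move=> altw; rewrite /qdim alt_blocks_alternating // big_seq1.
Qed.

Lemma qint_sumn_le_prod (s : seq nat) : qint q (sumn s).+1 <= \prod_(k <- s) qint q k.+1.
Proof.
elim: s => [|k s IH]; first by rewrite big_nil qint1.
rewrite big_cons /= -addSn; apply: le_trans (_ : _ <= qint q k.+1 * qint q (sumn s).+1) _.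
  by rewrite qint_mulSS lerDl mulr_ge0 ?qint_ge0.
by rewrite ler_wpM2l ?qint_ge0.
Qed.

Lemma qint_size_le_qdim (w : word) : qint q (size w).+1 <= qdim q w.
Proof. by rewrite /qdim -sumn_alt_blocks qint_sumn_le_prod. Qed.

Lemma qdim_ge1 (w : word) : 1 <= qdim q w.
Proof. exact: le_trans (qint_ge1 _) (qint_size_le_qdim w). Qed.

Lemma qdim_ge0 (w : word) : 0 <= qdim q w.
Proof. exact: le_trans ler01 (qdim_ge1 w). Qed.

Lemma qdim_le_expr (w : word) : qdim q w <= (q + q^-1) ^+ size w.
Proof.
rewrite /qdim -sumn_alt_blocks; elim: (alt_blocks w) => [|k s IH] /=.
  by rewrite big_nil expr0.
by rewrite big_cons exprD ler_pM ?qint_ge0 ?qint_le_expr ?prodr_ge0 // => i _; rewrite qint_ge0.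
Qed.

Lemma qdim_rcons_cons (x y : word) a :
  qdim q (rcons x a ++ ~~ a :: y) + qdim q x * qdim q y =
  qdim q (rcons x a) * qdim q (~~ a :: y).
Proof.
have [P [A [-> altAa bPAa]]] := split_last_block x a.
have [B [Q [-> altaB baBQ]]] := split_first_block y (~~ a).
have altA := alternating_rconsl altAa; have altB := path_sorted altaB.
have altAaB : alternating (rcons A a ++ ~~ a :: B).
  apply: alternating_cat; rewrite -?size_eq0 ?size_rcons // last_rcons /=.
  by case: (a).
have Aa_neq0 : rcons A a != [::] by rewrite -size_eq0 size_rcons.
have dx : qdim q (P ++ A) = qdim q P * qint q (size A).+1.
  by rewrite qdim_cat ?(qdim_alternating altA) // (block_boundary_rconsl bPAa).
have dxa : qdim q (rcons (P ++ A) a) = qdim q P * qint q (size A).+2.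
  by rewrite rcons_cat qdim_cat // (qdim_alternating altAa) size_rcons.
have dy : qdim q (B ++ Q) = qint q (size B).+1 * qdim q Q.
  by rewrite qdim_cat ?(qdim_alternating altB) // (block_boundary_behead baBQ).
have day : qdim q (~~ a :: B ++ Q) = qint q (size B).+2 * qdim q Q.
  by rewrite -cat_cons qdim_cat // (qdim_alternating altaB).
have dxay : qdim q (rcons (P ++ A) a ++ ~~ a :: B ++ Q) =
    qdim q P * qint q (size A + size B).+3 * qdim q Q.
  have -> : rcons (P ++ A) a ++ ~~ a :: B ++ Q = P ++ ((rcons A a ++ ~~ a :: B) ++ Q).
    by rewrite rcons_cat -!catA.
  rewrite qdim_cat; last by rewrite -catA; apply: block_boundary_catr.
  rewrite qdim_cat; last exact: block_boundary_catl.
  by rewrite (qdim_alternating altAaB) size_cat size_rcons /= addnS -addSn mulrA.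
rewrite dxay dx dxa dy day.
have := qint_mulSS (size A).+1 (size B).+1; rewrite addSn addnS => mulSS.
transitivity (qdim q P * (qint q (size A).+2 * qint q (size B).+2) * qdim q Q).
  by rewrite mulSS; ring.
by ring.
Qed.

Lemma qdim_fusion (x y : word) :
  \sum_(z <- fusion x y) qdim q z = qdim q x * qdim q y.
Proof.
elim/last_ind: x y => [|x a IH] y; first by rewrite fusion_nill big_seq1 qdim_nil mul1r.
case: y => [|b y]; first by rewrite fusion_nilr big_seq1 qdim_nil mulr1.
rewrite fusion_rcons_cons big_cons; have [->|ba] := eqVneq b (~~ a).
  by rewrite IH qdim_rcons_cons.
rewrite big_nil addr0 qdim_cat // /block_boundary last_rcons /=.
by move: ba; case: a; case: b; rewrite ?orbT.
Qed.

Lemma ball_size_ge1 (X : seq word) n : 1 <= ball_size q X n.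
Proof.
rewrite /ball_size.
have /perm_to_rem/(perm_big _) -> : [::] \in Defs.ball X n by apply/ballP; exists 0%N.
by rewrite big_cons qdim_nil expr1n lerDl sumr_ge0 // => w _; rewrite sqr_ge0.
Qed.

Lemma ball_size_submul (X : seq word) n m :
  ball_size q X (n + m) <= ball_size q X n * ball_size q X m.
Proof.
rewrite /ball_size.
set products := flatten [seq fusion x y | x <- Defs.ball X n, y <- Defs.ball X m].
apply: (@le_trans _ _ (\sum_(z <- products) qdim q z ^+ 2)).
  apply: ler_sum_sub_uniq => [z||z /mem_ball_fusion [x [y [hx hy hz]]]].
  - exact: sqr_ge0.
  - exact: undup_uniq.
  apply/flattenP; exists (fusion x y) => //.
  by apply/allpairsP; exists (x, y).
rewrite big_flatten /= big_allpairs_dep /= mulr_suml; apply: ler_sum => x _.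
rewrite mulr_sumr; apply: ler_sum => y _; rewrite -exprMn -qdim_fusion.
by apply: sumr_sqr_le => z; apply: qdim_ge0.
Qed.

Lemma expr_le_qdim_wsubst (x r w : word) : ~~ alternating x ->
  (q + q^-1) ^+ size w <= qdim q (r ++ wsubst x w).
Proof.
move=> x_nonalt; elim: w r => [|b w IH] r; first by rewrite expr0 qdim_ge1.
have [u [v [xb_uv u_neq0 v_neq0 luv]]] := subst_letter_split b x_nonalt.
rewrite wsubst_cons xb_uv -catA catA qdim_cat; last first.
  apply: block_boundary_catr => //; apply: block_boundary_catl => //.
  by rewrite /block_boundary luv eqxx !orbT.
rewrite exprS ler_pM ?exprn_ge0 ?(le_trans _ two_le_addrV) //.
apply: le_trans (qint_size_le_qdim _); rewrite -qint2 qint_le // size_cat ltnS.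
by rewrite ltn_addl // lt0n size_eq0.
Qed.

Lemma qdim_le_wsubst_alternating (x w : word) :
  alternating x -> x != [::] -> last true x = head true x ->
  qdim q w <= qdim q (wsubst x w).
Proof.
move=> x_alt x_neq0 x_last.
elim: {w}(size w).+1 {-2}w (ltnSn (size w)) => [//|n IH] [|b w] size_w.
  by rewrite /wsubst /= lexx.
have [B [Q [w_BQ alt_bB bBQ]]] := split_first_block w b; rewrite w_BQ in size_w *.
rewrite -cat_cons wsubst_cat qdim_cat // qdim_cat; last first.
  case: Q bBQ {w_BQ size_w} => [|c Q].
    by move=> _; rewrite /block_boundary (_ : wsubst x [::] = [::]) //= orbT.
  rewrite /block_boundary /= => /eqP lbB.
  by rewrite last_wsubst // head_wsubst //= lbB eqxx !orbT.
have alt_xbB := alternating_wsubst x_alt x_neq0 x_last alt_bB.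
rewrite (qdim_alternating alt_bB) (qdim_alternating alt_xbB).
rewrite ler_pM ?qint_ge0 ?qdim_ge0 ?qint_le ?IH //.
  by rewrite size_wsubst ltnS leq_pmulr // lt0n size_eq0.
by move: size_w; rewrite /= size_cat; lia.
Qed.

Lemma qdim_le_wsubst (x w : word) : charge x != 0 -> qdim q w <= qdim q (wsubst x w).
Proof.
move=> x_charge; have x_neq0 : x != [::] by apply: contra_neq x_charge => ->; rewrite charge_nil.
have [x_alt|x_nonalt] := boolP (alternating x).
  by rewrite qdim_le_wsubst_alternating ?alternating_charge_neq0.
exact: le_trans (qdim_le_expr w) (expr_le_qdim_wsubst [::] w x_nonalt).
Qed.

Lemma ball_size_Xcan_le (X : seq word) n : generating X ->
  ball_size q Xcan n <= ball_size q X n.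
Proof.
move=> X_gen; have [x x_in_X x_charge] := generating_charge_neq0 X_gen.
have x_neq0 : x != [::] by apply: contra_neq x_charge => ->; rewrite charge_nil.
have x_neq_conj : x != wconj x by apply: contra_neq x_charge => /charge_eq0_wconj.
rewrite /ball_size.
apply: le_trans (_ : _ <= \sum_(w <- Defs.ball Xcan n) qdim q (wsubst x w) ^+ 2) _.
  by apply: ler_sum => w _; rewrite lerXn2r ?nnegrE ?qdim_ge0 ?qdim_le_wsubst.
rewrite -(big_map (wsubst x) xpredT (fun z => qdim q z ^+ 2)).
apply: ler_sum_sub_uniq; first by move=> z; apply: sqr_ge0.
  by rewrite map_inj_uniq ?undup_uniq //; apply: wsubst_inj.
move=> _ /mapP [w /ballP [m le_mn hw] ->]; apply/ballP; exists (size w).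
  exact: leq_trans (size_prod_support_Xcan hw) le_mn.
by apply: wsubst_prod_support; case: X_gen.
Qed.

Lemma cvgn_root_ball_size (X : seq word) : cvgn (fun n => ball_size q X n `^ n%:R^-1).
Proof. exact: cvgn_root_submul (ball_size_ge1 X) (ball_size_submul X). Qed.

Lemma omegaX_Xcan_le (X : seq word) : generating X -> omegaX q Xcan <= omegaX q X.
Proof.
move=> X_gen; rewrite /omegaX.
apply: ler_lim; [exact: cvgn_root_ball_size | exact: cvgn_root_ball_size | apply: nearW => n].
have ball_size_ge0 Y : ball_size q Y n \is Num.nneg.
  by rewrite nnegrE (le_trans ler01) ?ball_size_ge1.
by rewrite ge0_ler_powR ?invr_ge0 ?ler0n ?ball_size_Xcan_le.
Qed.

Lemma omega_Xcan : omega q = omegaX q Xcan.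
Proof.
rewrite /omega; set S := (X in inf X).
have S_Xcan : S (omegaX q Xcan) by exists Xcan => //; exact: generating_Xcan.
have S_lb : lbound S (omegaX q Xcan) by move=> _ [X X_gen <-]; apply: omegaX_Xcan_le.
apply/le_anti/andP; split; first by apply: (ge_inf _) => //; exists (omegaX q Xcan).
by apply: lb_le_inf => //; exists (omegaX q Xcan).
Qed.

End QuantumDimension.

Local Open Scope complex_scope.

Theorem proposition7p6 (R : realType) (N : nat) (F : 'M[R[i]]_N) (q : R) :
  (2 <= N)%N ->
  F \in unitmx ->
  \tr (adjmx F *m F) = \tr (invmx (adjmx F *m F)) ->
  0 < q -> q <= 1 ->
  (q + q^-1)%:C = \tr (adjmx F *m F) ->
  omega q = omegaX q Xcan.
Proof.
(* The hypotheses on F only identify q as the parameter of R(U_F^+);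
   the equality holds for every q > 0. *)
by move=> _ _ _ q_gt0 _ _; apply: omega_Xcan.
Qed.
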